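(* $\mathfrak a_{11}(n)=\mathfrak a_{16}(n)$ for all $n\ge4$, and $\mathfrak a_{13}(n)=\mathfrak a_{20}(n)$ for all $n\ge3$.
   Context: Pauli matrices $I,X,Y,Z$; $A_jB_{j+1}$ denotes the length-$n$ Pauli string with $A$ at position $j$, $B$ at $j+1$, $I$ elsewhere. For a set $S$ of Pauli strings, $\mathrm{Lie}\langle S\rangle$ is the smallest real Lie subalgebra of $\mathfrak u(2^n)$ containing $\{iP:P\in S\}$. For a set $G$ of two-qubit strings, $G(n)=\mathrm{Lie}\langle A_jB_{j+1}:AB\in G,1\le j\le n-1\rangle$. Generating sets: $\mathfrak a_{11}=\{XY,YX,YZ\}$, $\mathfrak a_{16}=\{XY,YX,YZ,ZY\}$, $\mathfrak a_{13}=\{XX,YY,YZ\}$, $\mathfrak a_{20}=\{XX,YY,ZZ,ZY\}$. *)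

From HB Require Import structures.
From mathcomp Require Import all_boot all_order all_algebra.
From mathcomp Require Import complex.
From mathcomp Require Import Rstruct.
Set Implicit Arguments. Unset Strict Implicit. Unset Printing Implicit Defensive.
Import Order.TTheory GRing.Theory Num.Theory.
Local Open Scope ring_scope.
Local Open Scope complex_scope.

Definition C := complex Rdefinitions.R.

Inductive pauli := pI | pX | pY | pZ.

Definition pauli_eqb (a b : pauli) : bool :=
  match a, b with
  | pI, pI | pX, pX | pY, pY | pZ, pZ => true
  | _, _ => false
  end.

Definition pauli_entry (P : pauli) (r c : bool) : C :=
  match P with
  | pI => if r == c then 1 else 0
  | pX => if r == c then 0 else 1
  | pY => if r == c then 0 else (if r then 'i else - 'i)   (* Y = [[0,-i],[i,0]] *)
  | pZ => if r == c then (if r then -1 else 1) else 0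
  end.

(* bit of index r corresponding to qubit k (0-indexed, qubit 0 = most
   significant, matching the Kronecker product P_0 (x) ... (x) P_{n-1}) *)
Definition qbit (n k r : nat) : bool := odd (r %/ 2 ^ (n - k.+1)).

(* The Pauli string with P k at position k, as a 2^n x 2^n complex matrix:
   the Kronecker product P 0 (x) P 1 (x) ... (x) P (n-1). *)
Definition pauli_string (n : nat) (P : nat -> pauli) : 'M[C]_(2 ^ n) :=
  \matrix_(r, c) \prod_(k < n) pauli_entry (P k) (qbit n k r) (qbit n k c).

Definition two_site (A B : pauli) (j : nat) : nat -> pauli :=
  fun k => if k == j then A else if k == j.+1 then B else pI.

(* Lie<S>: smallest real Lie subalgebra of 'M[C]_N containing S
   (real span + closure under commutator). *)
Inductive lie_closure (N : nat) (S : 'M[C]_N -> Prop) : 'M[C]_N -> Prop :=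
  | lc_gen M : S M -> lie_closure S M
  | lc_zero : lie_closure S 0
  | lc_add M1 M2 : lie_closure S M1 -> lie_closure S M2 -> lie_closure S (M1 + M2)
  | lc_scale (r : Rdefinitions.R) M : lie_closure S M -> lie_closure S ((r%:C) *: M)
  | lc_bracket M1 M2 : lie_closure S M1 -> lie_closure S M2 ->
      lie_closure S (M1 *m M2 - M2 *m M1).

(* G(n) = Lie< i A_j B_{j+1} : AB in G, 1 <= j <= n-1 >  (here 0 <= j, j+1 < n) *)
Definition Gn (G : seq (pauli * pauli)) (n : nat) : 'M[C]_(2 ^ n) -> Prop :=
  lie_closure (fun M => exists A B j,
    has (fun ab => pauli_eqb ab.1 A && pauli_eqb ab.2 B) G /\ (ltn j.+1 n) /\
    M = 'i *: pauli_string n (two_site A B j)).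

Definition a11 : seq (pauli * pauli) := [:: (pX, pY); (pY, pX); (pY, pZ)].
Definition a16 : seq (pauli * pauli) := [:: (pX, pY); (pY, pX); (pY, pZ); (pZ, pY)].
Definition a13 : seq (pauli * pauli) := [:: (pX, pX); (pY, pY); (pY, pZ)].
Definition a20 : seq (pauli * pauli) := [:: (pX, pX); (pY, pY); (pZ, pZ); (pZ, pY)].

(* The generating sets in each pair differ by one or two nearest-neighbour terms, so it
   suffices to derive every missing generator inside the other Lie algebra. Pauli strings
   multiply to Pauli strings up to a power of [i], and for anticommuting strings [P], [Q]
   the bracket [[iP, iQ] = -2 i PQ] is a real multiple of [i PQ]. Explicit chains of such
   brackets inside a window of three or four consecutive qubits produce the missing
   generators: a window [I A B] places [A B] at any site but the first, where a window
   [A B I .. I] is used instead; for [a11] that window needs four qubits, hence [n >= 4]. *)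

From HB Require Import structures.
From mathcomp Require Import all_boot all_order all_algebra complex Rstruct.
From mathcomp Require Import zify lra.
Set Implicit Arguments. Unset Strict Implicit. Unset Printing Implicit Defensive.
Import GRing.Theory.
Local Open Scope ring_scope.
Local Open Scope complex_scope.

Definition pauli_eqP : Equality.axiom pauli_eqb.
Proof. by case; case; constructor. Qed.
HB.instance Definition _ := hasDecEq.Build pauli pauli_eqP.

Definition pauli_mul (a b : pauli) : pauli :=
  match a, b with
  | pI, x | x, pI => x
  | pX, pX | pY, pY | pZ, pZ => pI
  | pX, pY | pY, pX => pZ
  | pY, pZ | pZ, pY => pX
  | pZ, pX | pX, pZ => pY
  end.

(* [P * Q = 'i ^+ pauli_phase P Q * pauli_mul P Q], e.g. [X Y = i Z], [Y X = -i Z]. *)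
Definition pauli_phase (a b : pauli) : nat :=
  match a, b with
  | pX, pY | pY, pZ | pZ, pX => 1
  | pY, pX | pZ, pY | pX, pZ => 3
  | _, _ => 0
  end.

Lemma pauli_mulC : commutative pauli_mul.
Proof. by case; case. Qed.

Lemma pauli_phase_swap a b : (4 %| pauli_phase a b + pauli_phase b a)%N.
Proof. by case: a; case: b. Qed.

Lemma pauli_entry_mul P Q (r c : bool) :
  pauli_entry P r false * pauli_entry Q false c + pauli_entry P r true * pauli_entry Q true c
  = 'i ^+ pauli_phase P Q * pauli_entry (pauli_mul P Q) r c.
Proof.
have ii : 'i * 'i = -1 :> C by rewrite -expr2 sqr_i.
have i3 : 'i ^+ 3 = - 'i :> C by rewrite exprS sqr_i mulrN1.
by case: P; case: Q; case: r; case: c; rewrite /= ?i3 ?expr1 ?expr0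
  ?(mul0r, mulr0, add0r, addr0, mul1r, mulr1, mulNr, mulrN, ii, opprK).
Qed.

Lemma big_nat_double (V : nmodType) (g : nat -> V) m :
  \sum_(0 <= s < 2 * m) g s = \sum_(0 <= s < m) (g (2 * s)%N + g (2 * s).+1).
Proof.
elim: m => [|m IH]; first by rewrite !big_nil.
by rewrite mulnS !addSn add0n !big_nat_recr //= IH addrA.
Qed.

Lemma qbit_last n s (b : bool) : qbit n.+1 n (2 * s + b) = b.
Proof. by rewrite /qbit subnn expn0 divn1 oddD oddM; case: b. Qed.

Lemma qbit_lt n k s (b : bool) : (k < n)%N -> qbit n.+1 k (2 * s + b) = qbit n k s.
Proof.
move=> lt_kn; rewrite /qbit subSS -(subnSK lt_kn) expnS divnMA; congr (odd (_ %/ _)).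
by rewrite mulnC divnMDl // divn_small ?addn0 //; case: b.
Qed.

(* Summing over all [2 ^ n] basis indices is summing over all choices of one bit per qubit. *)
Lemma sum_prod_qbit (R : pzSemiRingType) n (f : nat -> bool -> R) :
  \sum_(s < 2 ^ n) \prod_(k < n) f k (qbit n k s) = \prod_(k < n) (f k false + f k true).
Proof.
elim: n f => [|n IH] f; first by rewrite expn0 big_ord1 !big_ord0.
rewrite -(big_mkord xpredT (fun s => \prod_(k < n.+1) f k (qbit n.+1 k s))) expnS.
rewrite big_nat_double big_ord_recr /= -IH big_mkord mulr_suml; apply: eq_bigr => s _.
have qbit_pair (b : bool) : \prod_(k < n.+1) f k (qbit n.+1 k (2 * s + b)) =
                   \prod_(k < n) f k (qbit n k s) * f n b.
  by rewrite big_ord_recr /= qbit_last; congr (_ * _); apply: eq_bigr => k _; rewrite qbit_lt.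
by rewrite mulrDr -!qbit_pair /= addn0 addn1.
Qed.

Lemma eq_pauli_string n P Q : P =1 Q -> pauli_string n P = pauli_string n Q.
Proof. by move=> eqPQ; apply/matrixP => r c; rewrite !mxE; apply: eq_bigr => k _; rewrite eqPQ. Qed.

Lemma pauli_string_mul n P Q :
  pauli_string n P *m pauli_string n Q =
  (\prod_(k < n) 'i ^+ pauli_phase (P k) (Q k)) *:
    pauli_string n (fun k => pauli_mul (P k) (Q k)).
Proof.
apply/matrixP => r c; rewrite !mxE.
under eq_bigr do rewrite !mxE -big_split /=.
rewrite (sum_prod_qbit n (fun k b =>
  pauli_entry (P k) (qbit n k r) b * pauli_entry (Q k) b (qbit n k c))).
by rewrite -big_split /=; apply: eq_bigr => k _; apply: pauli_entry_mul.
Qed.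

Definition at_site (w : nat) (l : seq pauli) : nat -> pauli :=
  fun k => if (w <= k)%N then nth pI l (k - w) else pI.

Fixpoint word_mul (l1 l2 : seq pauli) : seq pauli :=
  match l1, l2 with
  | a :: t, b :: u => pauli_mul a b :: word_mul t u
  | [::], u => u
  | t, [::] => t
  end.

Fixpoint word_phase (l1 l2 : seq pauli) : nat :=
  match l1, l2 with
  | a :: t, b :: u => (pauli_phase a b + word_phase t u)%N
  | _, _ => 0%N
  end.

Lemma nth_word_mul l1 l2 i : nth pI (word_mul l1 l2) i = pauli_mul (nth pI l1 i) (nth pI l2 i).
Proof.
elim: l1 l2 i => [|a t IH] [|b u] [|i] //=; rewrite ?nth_nil //; first by case: a.
by case: (nth _ _ _).
Qed.

Lemma at_site_mul w l1 l2 k :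
  pauli_mul (at_site w l1 k) (at_site w l2 k) = at_site w (word_mul l1 l2) k.
Proof. by rewrite /at_site; case: (w <= k)%N; rewrite ?nth_word_mul. Qed.

Lemma at_site_word_mulC w l1 l2 : at_site w (word_mul l1 l2) =1 at_site w (word_mul l2 l1).
Proof. by move=> k; rewrite -!at_site_mul pauli_mulC. Qed.

Lemma word_phase_swap l1 l2 : (4 %| word_phase l1 l2 + word_phase l2 l1)%N.
Proof.
elim: l1 l2 => [|a t IH] [|b u] //=.
by rewrite addnACA dvdn_add ?pauli_phase_swap.
Qed.

Lemma at_site_nil w k : at_site w [::] k = pI.
Proof. by rewrite /at_site nth_nil; case: ifP. Qed.

Lemma at_site_cons w a t k : at_site w (a :: t) k = if k == w then a else at_site w.+1 t k.
Proof.
rewrite /at_site; case: (ltngtP k w) => [//|lt_wk|->]; last by rewrite subnn.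
by rewrite -(subnSK lt_wk).
Qed.

Lemma at_site_lt w l k : (k < w)%N -> at_site w l k = pI.
Proof. by rewrite /at_site ltnNge => /negbTE->. Qed.

Lemma sum_phase_at_site n w l1 l2 : (w + size l1 <= n)%N ->
  (\sum_(k < n) pauli_phase (at_site w l1 k) (at_site w l2 k))%N = word_phase l1 l2.
Proof.
elim: l1 l2 w => [|a t IH] l2 w le_n.
  by rewrite big1 // => k _; rewrite at_site_nil; case: (at_site _ _ _).
case: l2 => [|b u].
  by rewrite big1 //= => k _; rewrite at_site_nil; case: (at_site _ _ _).
have lt_wn : (w < n)%N by move: le_n => /=; lia.
rewrite /= -(IH u w.+1); last by move: le_n => /=; lia.
rewrite [LHS](bigD1 (Ordinal lt_wn)) // [in RHS](bigD1 (Ordinal lt_wn)) //= !at_site_cons eqxx.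
rewrite !at_site_lt // add0n; congr (_ + _)%N.
by apply: eq_bigr => k ne_kw; rewrite !at_site_cons (negbTE (ne_kw : k != w :> nat)).
Qed.

Lemma pauli_string_at_site_mul n w l1 l2 : (w + size l1 <= n)%N ->
  pauli_string n (at_site w l1) *m pauli_string n (at_site w l2) =
  'i ^+ word_phase l1 l2 *: pauli_string n (at_site w (word_mul l1 l2)).
Proof.
move=> le_n; rewrite pauli_string_mul prodrXr sum_phase_at_site //.
by congr (_ *: _); apply: eq_pauli_string => k; apply: at_site_mul.
Qed.

Lemma expr_i_odd a : odd a -> 'i ^+ a = 'i :> C \/ 'i ^+ a = - 'i :> C.
Proof.
move=> odd_a; rewrite -(odd_double_half a) odd_a -mul2n exprD exprM sqr_i -signr_odd /=.
by case: (odd _); [right; rewrite expr1 mulrN1 | left; rewrite expr0 mulr1].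
Qed.

Lemma word_phase_swap_expr_i l1 l2 : odd (word_phase l1 l2) ->
  'i ^+ word_phase l2 l1 = - 'i ^+ word_phase l1 l2 :> C.
Proof.
move=> odd12; have /dvdnP[q sum_eq] := word_phase_swap l1 l2.
have prod1 : 'i ^+ word_phase l1 l2 * 'i ^+ word_phase l2 l1 = 1 :> C.
  by rewrite -exprD sum_eq mulnC exprM (exprM _ 2 2) sqr_i sqrrN !expr1n.
have sq : 'i ^+ word_phase l1 l2 * 'i ^+ word_phase l1 l2 = -1 :> C.
  by rewrite -expr2 exprAC sqr_i -signr_odd odd12 expr1.
by rewrite -[RHS]mulr1 -prod1 mulrA mulNr sq opprK mul1r.
Qed.

(* [i P] and [i Q] anticommute, and [[i P, i Q] = -2 i P Q], a nonzero real multiple of [i P Q]. *)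
Lemma lie_closure_at_site_mul n (S : 'M[C]_(2 ^ n) -> Prop) w l1 l2 :
  lie_closure S ('i *: pauli_string n (at_site w l1)) ->
  lie_closure S ('i *: pauli_string n (at_site w l2)) ->
  (w + size l1 <= n)%N -> (w + size l2 <= n)%N -> odd (word_phase l1 l2) ->
  lie_closure S ('i *: pauli_string n (at_site w (word_mul l1 l2))).
Proof.
move=> S1 S2 le1 le2 odd12.
have scaled_bracket (r : Rdefinitions.R) := lc_scale r (lc_bracket S1 S2).
move: scaled_bracket; rewrite -!scalemxAl -!scalemxAr !scalerA.
rewrite !pauli_string_at_site_mul // (eq_pauli_string _ (at_site_word_mulC w l2 l1)).
rewrite (word_phase_swap_expr_i odd12) !scalerA -scalerBl => scaled_bracket.
suff [r ri] : exists r : Rdefinitions.R,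
    r%:C * ('i * 'i * 'i ^+ word_phase l1 l2 - 'i * 'i * - 'i ^+ word_phase l1 l2) = 'i.
  by have := scaled_bracket r; rewrite scalerA ri.
have [-> | ->] := expr_i_odd odd12; [exists (-1/2) | exists (1/2)];
  by apply/eqP; rewrite eq_complex /=; apply/andP; split; apply/eqP; lra.
Qed.

Lemma lie_closure_mono N (S S' : 'M[C]_N -> Prop) :
  (forall M, S M -> lie_closure S' M) -> forall M, lie_closure S M -> lie_closure S' M.
Proof.
move=> SS' M; elim=> {M} [M /SS' //| | M1 M2 _ h1 _ h2 | r M _ h | M1 M2 _ h1 _ h2].
- exact: lc_zero.
- exact: lc_add.
- exact: lc_scale.
- exact: lc_bracket.
Qed.

Lemma has_pauli_pair (G : seq (pauli * pauli)) A B :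
  has (fun ab => pauli_eqb ab.1 A && pauli_eqb ab.2 B) G = ((A, B) \in G).
Proof. by rewrite -has_pred1; apply: eq_has => -[a b]. Qed.

Lemma Gn_generator G n A B j : (A, B) \in G -> (j.+1 < n)%N ->
  Gn G ('i *: pauli_string n (two_site A B j)).
Proof. by move=> AB_G lt_jn; apply: lc_gen; exists A, B, j; rewrite has_pauli_pair. Qed.

Lemma Gn_of_generators G G' n :
  (forall A B j, (A, B) \in G' -> (j.+1 < n)%N ->
     Gn G ('i *: pauli_string n (two_site A B j))) ->
  forall M : 'M[C]_(2 ^ n), Gn G' M -> Gn G M.
Proof.
move=> gens; apply: lie_closure_mono => _ [A [B [j [AB_G' [lt_jn ->]]]]].
by apply: gens; rewrite -?has_pauli_pair.
Qed.

Lemma Gn_subset G G' n : {subset G <= G'} -> forall M : 'M[C]_(2 ^ n), Gn G M -> Gn G' M.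
Proof. by move=> sGG'; apply: Gn_of_generators => A B j /sGG'; apply: Gn_generator. Qed.

Lemma at_site_nseqI w m l : at_site w (nseq m pI ++ l) =1 at_site (w + m) l.
Proof.
elim: m w => [|m IH] w k; first by rewrite addn0.
rewrite /= at_site_cons IH addSnnS; case: eqP => // ->.
by rewrite at_site_lt // addnS ltnS leq_addr.
Qed.

Lemma at_site_catI w l k : at_site w (l ++ nseq k pI) =1 at_site w l.
Proof.
by move=> i; rewrite /at_site nth_cat nth_nseq if_same; case: ltnP => // /(nth_default pI) ->.
Qed.

Lemma at_site_padded w m k A B :
  at_site w (nseq m pI ++ [:: A; B] ++ nseq k pI) =1 two_site A B (w + m).
Proof.
by move=> i; rewrite at_site_nseqI at_site_catI !at_site_cons at_site_nil.
Qed.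

Local Notation Gword G n w l := (Gn G ('i *: pauli_string n (at_site w l))).

(* [l] is a generator of [G], padded with identities on both sides. *)
Definition gen_word (G : seq (pauli * pauli)) (l : seq pauli) : bool :=
  has (fun m => has (fun ab => l == nseq m pI ++ [:: ab.1; ab.2] ++ nseq (size l - m.+2) pI) G)
    (iota 0 (size l)).

Lemma Gn_gen_word G n w l : gen_word G l -> (w + size l <= n)%N -> Gword G n w l.
Proof.
case/hasP => m _ /hasP [[A B] AB_G]; move: (size l - m.+2)%N => k /eqP -> le_n.
rewrite (eq_pauli_string _ (at_site_padded w m k A B)); apply: Gn_generator => //.
by move: le_n; rewrite !size_cat !size_nseq /=; lia.
Qed.
Arguments Gn_gen_word {G n w l} & _ _.

Lemma Gn_two_site_of_windows G n A B k :
  Gword G n 0 ([:: A; B] ++ nseq k pI) ->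
  (forall w, (w + 3 <= n)%N -> Gword G n w [:: pI; A; B]) ->
  forall j, (j.+1 < n)%N -> Gn G ('i *: pauli_string n (two_site A B j)).
Proof.
move=> left_window window [|j] lt_jn.
  by rewrite -(eq_pauli_string _ (at_site_padded 0 0 k A B)).
rewrite -[j.+1]addn1 -(eq_pauli_string _ (at_site_padded j 1 0 A B)); apply: window; lia.
Qed.

Lemma Gn_a11_ZYII n w : (w + 4 <= n)%N -> Gword a11 n w [:: pZ; pY; pI; pI].
Proof.
move=> le_n.
have YZII : Gword a11 n w [:: pY; pZ; pI; pI] := Gn_gen_word isT le_n.
have IXYI : Gword a11 n w [:: pI; pX; pY; pI] := Gn_gen_word isT le_n.
have YXII : Gword a11 n w [:: pY; pX; pI; pI] := Gn_gen_word isT le_n.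
have IIXY : Gword a11 n w [:: pI; pI; pX; pY] := Gn_gen_word isT le_n.
have IYZI : Gword a11 n w [:: pI; pY; pZ; pI] := Gn_gen_word isT le_n.
have XYII : Gword a11 n w [:: pX; pY; pI; pI] := Gn_gen_word isT le_n.
have IYXI : Gword a11 n w [:: pI; pY; pX; pI] := Gn_gen_word isT le_n.
have YYYI : Gword a11 n w [:: pY; pY; pY; pI] := lie_closure_at_site_mul YZII IXYI le_n le_n isT.
have IZYI : Gword a11 n w [:: pI; pZ; pY; pI] := lie_closure_at_site_mul YXII YYYI le_n le_n isT.
have IYYY : Gword a11 n w [:: pI; pY; pY; pY] := lie_closure_at_site_mul IIXY IYZI le_n le_n isT.
have XZYI : Gword a11 n w [:: pX; pZ; pY; pI] := lie_closure_at_site_mul XYII IXYI le_n le_n isT.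
have XXIY : Gword a11 n w [:: pX; pX; pI; pY] := lie_closure_at_site_mul IYYY XZYI le_n le_n isT.
have IXZY : Gword a11 n w [:: pI; pX; pZ; pY] := lie_closure_at_site_mul IIXY IXYI le_n le_n isT.
have YXXI : Gword a11 n w [:: pY; pX; pX; pI] := lie_closure_at_site_mul IYXI YZII le_n le_n isT.
have YIYY : Gword a11 n w [:: pY; pI; pY; pY] := lie_closure_at_site_mul IXZY YXXI le_n le_n isT.
have ZXYI : Gword a11 n w [:: pZ; pX; pY; pI] := lie_closure_at_site_mul XXIY YIYY le_n le_n isT.
exact: (lie_closure_at_site_mul IZYI ZXYI le_n le_n isT).
Qed.

Lemma Gn_a11_IZY n w : (w + 3 <= n)%N -> Gword a11 n w [:: pI; pZ; pY].
Proof.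
move=> le_n.
have YZI : Gword a11 n w [:: pY; pZ; pI] := Gn_gen_word isT le_n.
have IXY : Gword a11 n w [:: pI; pX; pY] := Gn_gen_word isT le_n.
have YXI : Gword a11 n w [:: pY; pX; pI] := Gn_gen_word isT le_n.
have YYY : Gword a11 n w [:: pY; pY; pY] := lie_closure_at_site_mul YZI IXY le_n le_n isT.
exact: (lie_closure_at_site_mul YXI YYY le_n le_n isT).
Qed.

Lemma Gn_a11_ZY n j : (4 <= n)%N -> (j.+1 < n)%N ->
  Gn a11 ('i *: pauli_string n (two_site pZ pY j)).
Proof.
move=> le_n.
by apply: (Gn_two_site_of_windows (k := 2) (Gn_a11_ZYII (w := 0) le_n) (@Gn_a11_IZY n)).
Qed.

Lemma Gn_a20_YZI n w : (w + 3 <= n)%N -> Gword a20 n w [:: pY; pZ; pI].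
Proof.
move=> le_n.
have ZZI : Gword a20 n w [:: pZ; pZ; pI] := Gn_gen_word isT le_n.
have ZYI : Gword a20 n w [:: pZ; pY; pI] := Gn_gen_word isT le_n.
have YYI : Gword a20 n w [:: pY; pY; pI] := Gn_gen_word isT le_n.
have IXI : Gword a20 n w [:: pI; pX; pI] := lie_closure_at_site_mul ZZI ZYI le_n le_n isT.
exact: (lie_closure_at_site_mul YYI IXI le_n le_n isT).
Qed.

Lemma Gn_a20_IYZ n w : (w + 3 <= n)%N -> Gword a20 n w [:: pI; pY; pZ].
Proof.
move=> le_n.
have IZZ : Gword a20 n w [:: pI; pZ; pZ] := Gn_gen_word isT le_n.
have ZYI : Gword a20 n w [:: pZ; pY; pI] := Gn_gen_word isT le_n.
have ZZI : Gword a20 n w [:: pZ; pZ; pI] := Gn_gen_word isT le_n.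
have ZXZ : Gword a20 n w [:: pZ; pX; pZ] := lie_closure_at_site_mul IZZ ZYI le_n le_n isT.
exact: (lie_closure_at_site_mul ZZI ZXZ le_n le_n isT).
Qed.

Lemma Gn_a20_YZ n j : (3 <= n)%N -> (j.+1 < n)%N ->
  Gn a20 ('i *: pauli_string n (two_site pY pZ j)).
Proof.
move=> le_n.
by apply: (Gn_two_site_of_windows (k := 1) (Gn_a20_YZI (w := 0) le_n) (@Gn_a20_IYZ n)).
Qed.

Lemma Gn_a13_ZZI n w : (w + 3 <= n)%N -> Gword a13 n w [:: pZ; pZ; pI].
Proof.
move=> le_n.
have XXI : Gword a13 n w [:: pX; pX; pI] := Gn_gen_word isT le_n.
have IYZ : Gword a13 n w [:: pI; pY; pZ] := Gn_gen_word isT le_n.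
have YZI : Gword a13 n w [:: pY; pZ; pI] := Gn_gen_word isT le_n.
have IYY : Gword a13 n w [:: pI; pY; pY] := Gn_gen_word isT le_n.
have IXX : Gword a13 n w [:: pI; pX; pX] := Gn_gen_word isT le_n.
have XZZ : Gword a13 n w [:: pX; pZ; pZ] := lie_closure_at_site_mul XXI IYZ le_n le_n isT.
have YXY : Gword a13 n w [:: pY; pX; pY] := lie_closure_at_site_mul YZI IYY le_n le_n isT.
have ZYX : Gword a13 n w [:: pZ; pY; pX] := lie_closure_at_site_mul XZZ YXY le_n le_n isT.
exact: (lie_closure_at_site_mul IXX ZYX le_n le_n isT).
Qed.

Lemma Gn_a13_IZZ n w : (w + 3 <= n)%N -> Gword a13 n w [:: pI; pZ; pZ].
Proof.
move=> le_n.
have YZI : Gword a13 n w [:: pY; pZ; pI] := Gn_gen_word isT le_n.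
have IYZ : Gword a13 n w [:: pI; pY; pZ] := Gn_gen_word isT le_n.
have YYI : Gword a13 n w [:: pY; pY; pI] := Gn_gen_word isT le_n.
have YXZ : Gword a13 n w [:: pY; pX; pZ] := lie_closure_at_site_mul YZI IYZ le_n le_n isT.
exact: (lie_closure_at_site_mul YYI YXZ le_n le_n isT).
Qed.

Lemma Gn_a13_ZZ n j : (3 <= n)%N -> (j.+1 < n)%N ->
  Gn a13 ('i *: pauli_string n (two_site pZ pZ j)).
Proof.
move=> le_n.
by apply: (Gn_two_site_of_windows (k := 1) (Gn_a13_ZZI (w := 0) le_n) (@Gn_a13_IZZ n)).
Qed.

Lemma Gn_a13_ZYI n w : (w + 3 <= n)%N -> Gword a13 n w [:: pZ; pY; pI].
Proof.
move=> le_n.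
have YZI : Gword a13 n w [:: pY; pZ; pI] := Gn_gen_word isT le_n.
have XXI : Gword a13 n w [:: pX; pX; pI] := Gn_gen_word isT le_n.
have IYY : Gword a13 n w [:: pI; pY; pY] := Gn_gen_word isT le_n.
have IXX : Gword a13 n w [:: pI; pX; pX] := Gn_gen_word isT le_n.
have XZY : Gword a13 n w [:: pX; pZ; pY] := lie_closure_at_site_mul XXI IYY le_n le_n isT.
have YYX : Gword a13 n w [:: pY; pY; pX] := lie_closure_at_site_mul IXX YZI le_n le_n isT.
have ZXZ : Gword a13 n w [:: pZ; pX; pZ] := lie_closure_at_site_mul XZY YYX le_n le_n isT.
exact: (lie_closure_at_site_mul (Gn_a13_IZZ le_n) ZXZ le_n le_n isT).
Qed.

Lemma Gn_a13_IZY n w : (w + 3 <= n)%N -> Gword a13 n w [:: pI; pZ; pY].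
Proof.
move=> le_n.
have YZI : Gword a13 n w [:: pY; pZ; pI] := Gn_gen_word isT le_n.
have IYY : Gword a13 n w [:: pI; pY; pY] := Gn_gen_word isT le_n.
have YYI : Gword a13 n w [:: pY; pY; pI] := Gn_gen_word isT le_n.
have YXY : Gword a13 n w [:: pY; pX; pY] := lie_closure_at_site_mul YZI IYY le_n le_n isT.
exact: (lie_closure_at_site_mul YYI YXY le_n le_n isT).
Qed.

Lemma Gn_a13_ZY n j : (3 <= n)%N -> (j.+1 < n)%N ->
  Gn a13 ('i *: pauli_string n (two_site pZ pY j)).
Proof.
move=> le_n.
by apply: (Gn_two_site_of_windows (k := 1) (Gn_a13_ZYI (w := 0) le_n) (@Gn_a13_IZY n)).
Qed.

Local Close Scope complex_scope.
Local Close Scope ring_scope.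

Theorem mainTheorem10 :
  (forall (n : nat), (4 <= n)%N ->
     forall M : 'M[C]_(2 ^ n), @Gn a11 n M <-> @Gn a16 n M) /\
  (forall (n : nat), (3 <= n)%N ->
     forall M : 'M[C]_(2 ^ n), @Gn a13 n M <-> @Gn a20 n M).
Proof.
split=> n le_n M; split.
- by apply: Gn_subset; apply/allP.
- apply: Gn_of_generators => A B j; rewrite !inE => /or4P[] /eqP[-> ->] lt_jn;
    by [apply: Gn_generator | apply: Gn_a11_ZY].
- apply: Gn_of_generators => A B j; rewrite !inE => /or3P[] /eqP[-> ->] lt_jn;
    by [apply: Gn_generator | apply: Gn_a20_YZ].
- apply: Gn_of_generators => A B j; rewrite !inE => /or4P[] /eqP[-> ->] lt_jn;
    by [apply: Gn_generator | apply: Gn_a13_ZZ | apply: Gn_a13_ZY].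
Qed.
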